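(* Let $x\in\mathcal{X}(\mathbb{Z}_S)$. For a cocycle $a(x)=a_1(x)+a_2(x):G_T\to U_2$ representing the class of $\pi_1^{u,\mathbb{Q}_p}(\bar X;b,x)$ in $H^1(G_T,U_2)$ and a cochain $b_x:G_T\to L_1$ with $db_x=c\cup a_1(x)$, let $\phi_x=b_x\cup a_1(x)-2c\cup a_2(x)$. Then the class $$[\phi_x]\in H^2(G_T,Z)\big/\big[H^1(G_T,L_1)\cup a_1(x)\big]$$ is independent of the choice of the representing cocycle $a(x)$ (and of $b_x$).
   Context: Setting. $E$ is an elliptic curve over $\mathbb{Q}$ with origin $e$ and $\operatorname{ord}_{s=1}L(E,s)=1$, $X=E\setminus\{e\}$, $\mathcal{X}$ the complement of the closure of $e$ in a regular minimal model over $\mathbb{Z}$; $p$ an odd prime of good reduction; $S$ a finite set of places containing $\infty$ and the bad primes, $T=S\cup\{p\}$, $G_T$ the Galois group of the maximal extension of $\mathbb{Q}$ unramified outside $T$. $b$ is a nonzero rational tangent vector at $e$ (tangential base point). $U=\pi_1^{u,\mathbb{Q}_p}(\bar X,b)$, $U_2=U^3\backslash U$, $L=\mathrm{Lie}\,U$, $L_2=L/L^3$, $L_1=L/L^2$, $Z=L^2/L^3\cong\mathbb{Q}_p(1)$; the logarithm identifies $U_2$ with $L_2$, and $L_2=L_1\oplus Z$ via the $G$-equivariant splitting $x\mapsto\frac12(x'-I(x'))$, with $I$ induced by $[-1]$ and the canonical path from $-b$ to $b$. Group law $(l_1+l_2)*(l_1'+l_2')=(l_1+l_1')+(l_2+l_2'+\frac12[l_1,l_1'])$.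 A cocycle $a=a_1+a_2$ into $U_2$: $a_1$ is an $L_1$-valued cocycle and $da_2=-\frac12 a_1\cup a_1$; $H^1(G_T,U_2)$ is the quotient of cocycles by $(u\cdot a)(g)=u\,a(g)\,g(u)^{-1}$. Cup products: $(c\cup c')(g,h)=[c(g),gc'(h)]$ for $L_1$-valued cochains, $(c\cup a)(g,h)=c(g)\,ga(h)$ for $\mathbb{Q}_p$-valued $c$. $c=\log\chi$ with $\chi$ the $p$-adic cyclotomic character. (Such $b_x$ exists under the hypothesis on $E$.) *)

From mathcomp Require Import all_boot all_order all_algebra.
From mathcomp Require Import monoid.

Set Implicit Arguments.
Unset Strict Implicit.
Unset Printing Implicit Defensive.

Import GRing.Theory.
Local Open Scope ring_scope.

Definition topology (T : Type) := (T -> Prop) -> Prop.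

Definition is_topology (T : Type) (op : topology T) : Prop :=
  [/\ op (fun _ => True),
      (forall U V, op U -> op V -> op (fun x => U x /\ V x)) &
      (forall (I : Type) (F : I -> T -> Prop),
          (forall i, op (F i)) -> op (fun x => exists i, F i x))].

Definition prod_top (A B : Type) (opA : topology A) (opB : topology B)
  : topology (A * B) :=
  fun W => forall x y, W (x, y) ->
    exists U V, [/\ opA U, opB V, U x, V y &
                    forall x' y', U x' -> V y' -> W (x', y')].

Definition cont (A B : Type) (opA : topology A) (opB : topology B)
  (f : A -> B) : Prop :=
  forall V, opB V -> opA (fun x => V (f x)).

Definition cont2 (A B C : Type) (opA : topology A) (opB : topology B)
  (opC : topology C) (f : A -> B -> C) : Prop :=
  cont (prod_top opA opB) opC (fun p => f p.1 p.2).

Section Setting.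
Variables (K : fieldType) (G : groupType).

Definition is_lin_action (M : lmodType K) (act : G -> M -> M) : Prop :=
  [/\ (forall x, act 1%g x = x),
      (forall g h x, act (g * h)%g x = act g (act h x)),
      (forall g x y, act g (x + y) = act g x + act g y) &
      (forall g (k : K) x, act g (k *: x) = k *: act g x)].

Definition is_equiv_bracket (L1 Z : lmodType K)
  (actL : G -> L1 -> L1) (actZ : G -> Z -> Z) (br : L1 -> L1 -> Z) : Prop :=
  [/\ (forall x y z, br (x + y) z = br x z + br y z),
      (forall x y z, br x (y + z) = br x y + br x z),
      (forall (k : K) x y, br (k *: x) y = k *: br x y),
      (forall x, br x x = 0) &
      (forall g x y, actZ g (br x y) = br (actL g x) (actL g y))].

Definition d1 (M : zmodType) (act : G -> M -> M) (f : G -> M) : G -> G -> M :=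
  fun g h => act g (f h) - f (g * h)%g + f g.

Definition is_cocycle1 (M : zmodType) (act : G -> M -> M) (f : G -> M) :=
  forall g h, d1 act f g h = 0.

Definition cupL (L1 Z : lmodType K) (actL : G -> L1 -> L1)
  (br : L1 -> L1 -> Z) (f f' : G -> L1) : G -> G -> Z :=
  fun g h => br (f g) (actL g (f' h)).

Definition cupK (M : lmodType K) (act : G -> M -> M)
  (c : G -> K) (a : G -> M) : G -> G -> M :=
  fun g h => c g *: act g (a h).

(* The group U_2 = L_1 (+) Z with the law                              *)
(*   (l1+l2)*(l1'+l2') = (l1+l1') + (l2+l2'+ 1/2 [l1,l1'])             *)

Variables (L1 Z : lmodType K).

Definition mulU2 (br : L1 -> L1 -> Z) (x y : L1 * Z) : L1 * Z :=
  (x.1 + y.1, x.2 + y.2 + 2%:R^-1 *: br x.1 y.1).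

Definition invU2 (x : L1 * Z) : L1 * Z := (- x.1, - x.2).

Definition actU2 (actL : G -> L1 -> L1) (actZ : G -> Z -> Z)
  (g : G) (x : L1 * Z) : L1 * Z := (actL g x.1, actZ g x.2).

Definition is_U2_cocycle (actL : G -> L1 -> L1) (actZ : G -> Z -> Z)
  (br : L1 -> L1 -> Z) (a1 : G -> L1) (a2 : G -> Z) : Prop :=
  is_cocycle1 actL a1 /\
  forall g h, d1 actZ a2 g h = - (2%:R^-1 *: cupL actL br a1 a1 g h).

Definition U2_cohomologous (actL : G -> L1 -> L1) (actZ : G -> Z -> Z)
  (br : L1 -> L1 -> Z) (a1 : G -> L1) (a2 : G -> Z)
  (a1' : G -> L1) (a2' : G -> Z) : Prop :=
  exists u : L1 * Z, forall g,
    (a1' g, a2' g) =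
    mulU2 br (mulU2 br u (a1 g, a2 g)) (invU2 (actU2 actL actZ g u)).

Definition phi_of (actL : G -> L1 -> L1) (actZ : G -> Z -> Z)
  (br : L1 -> L1 -> Z) (c : G -> K) (b a1 : G -> L1) (a2 : G -> Z)
  : G -> G -> Z :=
  fun g h => cupL actL br b a1 g h - 2%:R *: cupK actZ c a2 g h.

End Setting.

From mathcomp Require Import all_boot all_order all_algebra.
From mathcomp Require Import monoid.
From Stdlib Require Import FunctionalExtensionality PropExtensionality.

(* Write a' = u.a with u = (v, w) in U_2.  Then a1' = a1 - dv, and
   e := b' - b - c.(g |-> g v) is a cocycle because d(c.(g |-> g x)) = - c ∪ dx
   for the homomorphism c.  Expanding the cup products, phi' - phi is
   e ∪ a1 + d psi with psi := b' ∪ v - 2 c ∪ w: the Leibniz rule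
   d(f ∪ v) = df ∪ v - f ∪ dv absorbs the remaining terms, and the factor 2
   in phi clears the 1/2 in the group law of U_2. *)

Set Implicit Arguments.
Unset Strict Implicit.
Unset Printing Implicit Defensive.

Import GRing.Theory.
Local Open Scope ring_scope.

Lemma cont_comp (A B C : Type) (opA : topology A) (opB : topology B)
    (opC : topology C) (f : A -> B) (g : B -> C) :
  cont opA opB f -> cont opB opC g -> cont opA opC (fun x => g (f x)).
Proof. by move=> cf cg V /cg; apply: cf. Qed.

Lemma cont_cst (A B : Type) (opA : topology A) (opB : topology B) (y : B) :
  is_topology opA -> cont opA opB (fun _ => y).
Proof.
move=> [opT _ opU] V _.
have -> : (fun _ : A => V y) = (fun x => exists _ : V y, True).
  apply: functional_extensionality => x; apply: propositional_extensionality.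
  by split=> [Vy | []].
exact: (opU (V y) (fun _ _ => True)).
Qed.

(* An open set of the product is the union of the open rectangles it contains. *)
Lemma cont_pair (X A B : Type) (opX : topology X) (opA : topology A)
    (opB : topology B) (f1 : X -> A) (f2 : X -> B) :
  is_topology opX -> cont opX opA f1 -> cont opX opB f2 ->
  cont opX (prod_top opA opB) (fun x => (f1 x, f2 x)).
Proof.
move=> [_ opI opU] cf1 cf2 W oW.
pose rect := {UV : (A -> Prop) * (B -> Prop) |
  [/\ opA UV.1, opB UV.2 & forall x y, UV.1 x -> UV.2 y -> W (x, y)]}.
have -> : (fun x => W (f1 x, f2 x)) =
          (fun x => exists R : rect, (sval R).1 (f1 x) /\ (sval R).2 (f2 x)).
  apply: functional_extensionality => x; apply: propositional_extensionality.
  split=> [/oW [U [V [oU oV Ux Vy sUV]]] | [[[U V] [_ _ sUV]] [/= Ux Vy]]].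
  - by exists (exist _ (U, V) (And3 oU oV sUV)).
  - exact: sUV.
apply: opU => -[[U V] [oU oV _]] /=.
by apply: opI; [apply: cf1 | apply: cf2].
Qed.

Lemma cont2_comp (X A B C : Type) (opX : topology X) (opA : topology A)
    (opB : topology B) (opC : topology C)
    (h : A -> B -> C) (f1 : X -> A) (f2 : X -> B) :
  is_topology opX -> cont2 opA opB opC h ->
  cont opX opA f1 -> cont opX opB f2 -> cont opX opC (fun x => h (f1 x) (f2 x)).
Proof. by move=> tX ch cf1 cf2; exact: cont_comp (cont_pair tX cf1 cf2) ch. Qed.

Lemma cont2_cst_r (A B C : Type) (opA : topology A) (opB : topology B)
    (opC : topology C) (h : A -> B -> C) (y : B) :
  is_topology opA -> cont2 opA opB opC h -> cont opA opC (fun x => h x y).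
Proof. by move=> tA ch; apply: (cont2_comp (f1 := id) tA ch) => //; apply: cont_cst. Qed.

Lemma cont_sub (X : Type) (M : zmodType) (opX : topology X) (opM : topology M)
    (f g : X -> M) :
  is_topology opX -> cont2 opM opM opM (fun x y => x + y) ->
  cont opM opM (fun x => - x) ->
  cont opX opM f -> cont opX opM g -> cont opX opM (fun x => f x - g x).
Proof.
by move=> tX cadd copp cf cg; apply: cont2_comp cadd cf (cont_comp cg copp).
Qed.

Section LinearAction.
Variables (K : fieldType) (G : groupType) (M : lmodType K) (act : G -> M -> M).
Hypothesis hact : is_lin_action act.

Lemma lin_actM g h x : act (g * h)%g x = act g (act h x).
Proof. by case: hact. Qed.

Lemma lin_actD g x y : act g (x + y) = act g x + act g y.
Proof. by case: hact. Qed.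

Lemma lin_actZ g k x : act g (k *: x) = k *: act g x.
Proof. by case: hact. Qed.

Lemma lin_act0 g : act g 0 = 0.
Proof. by apply: (addrI (act g 0)); rewrite -lin_actD !addr0. Qed.

Lemma lin_actN g x : act g (- x) = - act g x.
Proof. by apply: (addrI (act g x)); rewrite -lin_actD !subrr lin_act0. Qed.

Lemma lin_actB g x y : act g (x - y) = act g x - act g y.
Proof. by rewrite lin_actD lin_actN. Qed.

Definition d0 (x : M) : G -> M := fun g => act g x - x.

Lemma act_d0 g h x : act g (d0 x h) = act (g * h)%g x - act g x.
Proof. by rewrite lin_actB lin_actM. Qed.

Lemma d1D f f' g h :
  d1 act (fun k => f k + f' k) g h = d1 act f g h + d1 act f' g h.
Proof. by rewrite /d1 lin_actD opprD [X in X + _]addrACA [LHS]addrACA. Qed.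

Lemma d1N f g h : d1 act (fun k => - f k) g h = - d1 act f g h.
Proof. by rewrite /d1 lin_actN -!opprD. Qed.

Lemma d1B f f' g h :
  d1 act (fun k => f k - f' k) g h = d1 act f g h - d1 act f' g h.
Proof. by rewrite d1D d1N. Qed.

Lemma d1Z k f g h : d1 act (fun l => k *: f l) g h = k *: d1 act f g h.
Proof. by rewrite /d1 lin_actZ scalerDr scalerBr. Qed.

Lemma cupKB c f f' g h :
  cupK act c (fun k => f k - f' k) g h = cupK act c f g h - cupK act c f' g h.
Proof. by rewrite /cupK lin_actB scalerBr. Qed.

Lemma d1_scale_orbit (c : G -> K) x :
  (forall g h, c (g * h)%g = c g + c h) ->
  forall g h, d1 act (fun k => c k *: act k x) g h = - cupK act c (d0 x) g h.
Proof.
move=> c_hom g h; rewrite /d1 /cupK act_d0 lin_actZ -lin_actM c_hom.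
by rewrite scalerDl scalerBr opprD addrCA subrr addr0 opprB addrC.
Qed.

End LinearAction.

Section EquivariantBracket.
Variables (K : fieldType) (G : groupType) (L1 Z : lmodType K).
Variables (actL : G -> L1 -> L1) (actZ : G -> Z -> Z) (br : L1 -> L1 -> Z).
Hypotheses (hactL : is_lin_action actL) (hbr : is_equiv_bracket actL actZ br).

Lemma brDl x y z : br (x + y) z = br x z + br y z.
Proof. by case: hbr. Qed.

Lemma brDr x y z : br x (y + z) = br x y + br x z.
Proof. by case: hbr. Qed.

Lemma brZl k x y : br (k *: x) y = k *: br x y.
Proof. by case: hbr. Qed.

Lemma brxx x : br x x = 0.
Proof. by case: hbr. Qed.

Lemma br_equiv g x y : actZ g (br x y) = br (actL g x) (actL g y).
Proof. by case: hbr. Qed.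

Lemma brNl x y : br (- x) y = - br x y.
Proof. by rewrite -scaleN1r brZl scaleN1r. Qed.

Lemma brBl x y z : br (x - y) z = br x z - br y z.
Proof. by rewrite brDl brNl. Qed.

Lemma brr0 x : br x 0 = 0.
Proof. by apply: (addrI (br x 0)); rewrite -brDr !addr0. Qed.

Lemma brNr x y : br x (- y) = - br x y.
Proof. by apply: (addrI (br x y)); rewrite -brDr !subrr brr0. Qed.

Lemma brBr x y z : br x (y - z) = br x y - br x z.
Proof. by rewrite brDr brNr. Qed.

Lemma d1_br_orbit (f : G -> L1) v g h :
  d1 actZ (fun k => br (f k) (actL k v)) g h =
  br (d1 actL f g h) (actL (g * h)%g v) - cupL actL br f (d0 actL v) g h.
Proof.
rewrite /d1 /cupL br_equiv (act_d0 hactL) -(lin_actM hactL) brBr !brDl brNl.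
by rewrite opprB addrCA addrK addrC.
Qed.

End EquivariantBracket.

Lemma U2_cohomologous_components (K : fieldType) (G : groupType) (L1 Z : lmodType K)
    (actL : G -> L1 -> L1) (actZ : G -> Z -> Z) (br : L1 -> L1 -> Z)
    (a1 a1' : G -> L1) (a2 a2' : G -> Z) :
  (2%:R : K) != 0 -> is_equiv_bracket actL actZ br ->
  U2_cohomologous actL actZ br a1 a2 a1' a2' ->
  exists v w,
    (forall g, a1' g = a1 g - d0 actL v g) /\
    (forall g, 2%:R *: (a2' g - a2 g) =
               br v (a1 g) - br (v + a1 g) (actL g v) - 2%:R *: d0 actZ w g).
Proof.
move=> two_neq0 hbr [[v w] hu]; exists v, w.
split=> g; have /pair_equal_spec[/= a1'E a2'E] := hu g.
  by rewrite a1'E opprB addrA [v + _]addrC.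
(* pair a2 g with - a2 g, the two brackets, and w with - g w *)
rewrite a2'E (brNr hbr) scalerN [X in _ *: X = _](ACl ((2*6)*(3*5)*(1*4))) /=.
rewrite subrr add0r.
by rewrite scalerDr -scalerBr scalerA mulfV // scale1r -scalerN opprB.
Qed.

Section ChangeOfCocycle.
Variables (K : fieldType) (G : groupType) (L1 Z : lmodType K).
Variables (actL : G -> L1 -> L1) (actZ : G -> Z -> Z) (br : L1 -> L1 -> Z).
Variable c : G -> K.
Hypotheses (hactL : is_lin_action actL) (hactZ : is_lin_action actZ).
Hypothesis hbr : is_equiv_bracket actL actZ br.
Hypothesis c_hom : forall g h, c (g * h)%g = c g + c h.

Variables (a1 a1' b b' : G -> L1) (a2 a2' : G -> Z) (v : L1) (w : Z).
Hypothesis ha1' : forall g, a1' g = a1 g - d0 actL v g.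
Hypothesis ha2' : forall g, 2%:R *: (a2' g - a2 g) =
  br v (a1 g) - br (v + a1 g) (actL g v) - 2%:R *: d0 actZ w g.
Hypothesis hb : forall g h, d1 actL b g h = cupK actL c a1 g h.
Hypothesis hb' : forall g h, d1 actL b' g h = cupK actL c a1' g h.

Definition shift_cocycle : G -> L1 := fun g => b' g - b g - c g *: actL g v.

Definition shift_cochain : G -> Z :=
  fun g => br (b' g) (actL g v) - 2%:R *: (c g *: actZ g w).

Lemma cupK_a1' g h :
  cupK actL c a1' g h = cupK actL c a1 g h - cupK actL c (d0 actL v) g h.
Proof. by rewrite -(cupKB hactL) /cupK ha1'. Qed.

Lemma shift_cocycleP : is_cocycle1 actL shift_cocycle.
Proof.
move=> g h; rewrite (d1B hactL (fun k => b' k - b k)) (d1B hactL b') hb hb'.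
by rewrite (d1_scale_orbit hactL) // cupK_a1' opprK addrAC subrK subrr.
Qed.

Lemma phi_of_shift g h :
  phi_of actL actZ br c b' a1' a2' g h - phi_of actL actZ br c b a1 a2 g h =
  cupL actL br shift_cocycle a1 g h + d1 actZ shift_cochain g h.
Proof.
set V := actL g v; set A := actL g (a1 h); set V' := actL (g * h)%g v.
have cup_a1 : cupL actL br b' a1' g h - cupL actL br b a1 g h =
    cupL actL br shift_cocycle a1 g h + c g *: br V A
    - cupL actL br b' (d0 actL v) g h.
  rewrite /cupL ha1' (lin_actB hactL) (brBr hbr) addrAC -(brBl hbr).
  have -> : b' g - b g = shift_cocycle g + c g *: V by rewrite subrK.
  by rewrite (brDl hbr) (brZl hbr).
have cup_a2 : 2%:R *: cupK actZ c a2' g h - 2%:R *: cupK actZ c a2 g h =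
    c g *: (br V A - br (V + A) V') - 2%:R *: cupK actZ c (d0 actZ w) g h.
  have scalerC (k k' : K) (x : Z) : k *: (k' *: x) = k' *: (k *: x).
    by rewrite !scalerA mulrC.
  rewrite -scalerBr -(cupKB hactZ) /cupK !(scalerC 2%:R) -scalerBr; congr (_ *: _).
  rewrite -(lin_actZ hactZ) ha2' !(lin_actB hactZ) (lin_actZ hactZ) !(br_equiv hbr).
  by rewrite (lin_actD hactL) -(lin_actM hactL) /d0 (lin_actB hactZ).
have dpsi : d1 actZ shift_cochain g h = c g *: br (V + A) V'
    - cupL actL br b' (d0 actL v) g h + 2%:R *: cupK actZ c (d0 actZ w) g h.
  rewrite (d1B hactZ (fun k => br (b' k) (actL k v))) (d1Z hactZ).
  rewrite (d1_scale_orbit hactZ) // scalerN opprK (d1_br_orbit hactL hbr) hb'.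
  rewrite /cupK ha1' (lin_actB hactL) (act_d0 hactL) (brZl hbr).
  have -> : A - (V' - V) = V + A - V' by rewrite opprB addrCA addrA.
  by rewrite (brBl hbr) (brxx hbr) subr0.
rewrite /phi_of opprD addrACA -opprD cup_a1 cup_a2 dpsi scalerBr.
by rewrite addrAC -[_ - _ - 2%:R *: _]addrA addrKA -addrA opprD !opprK addrAC.
Qed.

End ChangeOfCocycle.

Theorem lemma2p2
  (K : fieldType) (G : groupType) (L1 Z : lmodType K)
  (* topologies: G = G_T profinite group, K = Q_p, L1 and Z = Q_p(1) *)
  (opG : topology G) (opK : topology K)
  (opL : topology L1) (opZ : topology Z)
  (tG : is_topology opG) (tK : is_topology opK)
  (tL : is_topology opL) (tZ : is_topology opZ)
  (* G is a topological group *)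
  (mulG_cont : cont2 opG opG opG (fun g h => (g * h)%g))
  (invG_cont : cont opG opG (fun g => (g^-1)%g))
  (* K is a topological field (ring operations continuous) *)
  (addK_cont : cont2 opK opK opK (fun x y => x + y))
  (oppK_cont : cont opK opK (fun x => - x))
  (mulK_cont : cont2 opK opK opK (fun x y => x * y))
  (* L1 and Z are topological K-vector spaces *)
  (addL_cont : cont2 opL opL opL (fun x y => x + y))
  (oppL_cont : cont opL opL (fun x => - x))
  (scaleL_cont : cont2 opK opL opL (fun k x => k *: x))
  (addZ_cont : cont2 opZ opZ opZ (fun x y => x + y))
  (oppZ_cont : cont opZ opZ (fun x => - x))
  (scaleZ_cont : cont2 opK opZ opZ (fun k x => k *: x))
  (* 2 is invertible in K (char Q_p = 0) *)
  (two_neq0 : (2%:R : K) != 0)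
  (* continuous linear G-actions on L1 and Z *)
  (actL : G -> L1 -> L1) (actZ : G -> Z -> Z)
  (hactL : is_lin_action actL) (hactZ : is_lin_action actZ)
  (actL_cont : cont2 opG opL opL actL)
  (actZ_cont : cont2 opG opZ opZ actZ)
  (* the commutator bracket L1 x L1 -> Z = L^2/L^3 *)
  (br : L1 -> L1 -> Z) (hbr : is_equiv_bracket actL actZ br)
  (br_cont : cont2 opL opL opZ br)
  (* c = log chi : a continuous homomorphism G -> K *)
  (c : G -> K) (c_cont : cont opG opK c)
  (c_hom : forall g h, c (g * h)%g = c g + c h)
  (* two continuous cocycles a = a1 + a2, a' = a1' + a2' into U_2
     representing the same class in H^1(G_T, U_2) *)
  (a1 a1' : G -> L1) (a2 a2' : G -> Z)
  (a1_cont : cont opG opL a1) (a2_cont : cont opG opZ a2)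
  (a1'_cont : cont opG opL a1') (a2'_cont : cont opG opZ a2')
  (ha : is_U2_cocycle actL actZ br a1 a2)
  (ha' : is_U2_cocycle actL actZ br a1' a2')
  (hcoh : U2_cohomologous actL actZ br a1 a2 a1' a2')
  (* continuous cochains b, b' with db = c u a1, db' = c u a1' *)
  (b b' : G -> L1) (b_cont : cont opG opL b) (b'_cont : cont opG opL b')
  (hb : forall g h, d1 actL b g h = cupK actL c a1 g h)
  (hb' : forall g h, d1 actL b' g h = cupK actL c a1' g h) :
  (* [phi'] = [phi] in H^2(G_T, Z) / [H^1(G_T, L1) u a1] *)
  exists (e : G -> L1) (psi : G -> Z),
    [/\ cont opG opL e, is_cocycle1 actL e, cont opG opZ psi &
        forall g h,
          phi_of actL actZ br c b' a1' a2' g h - phi_of actL actZ br c b a1 a2 g h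
          = cupL actL br e a1 g h + d1 actZ psi g h].
Proof.
have [v [w [ha1' ha2']]] := U2_cohomologous_components two_neq0 hbr hcoh.
exists (shift_cocycle actL c b b' v), (shift_cochain actL actZ br c b' v w).
have orbitL_cont := cont2_cst_r v tG actL_cont.
have orbitZ_cont := cont2_cst_r w tG actZ_cont.
have two_cont : cont opG opK (fun _ => 2%:R) by exact: cont_cst.
split.
- apply: cont_sub => //; first exact: cont_sub.
  exact: (cont2_comp tG scaleL_cont c_cont orbitL_cont).
- exact: (shift_cocycleP hactL c_hom ha1' hb hb').
- apply: cont_sub => //; first exact: (cont2_comp tG br_cont b'_cont orbitL_cont).
  apply: (cont2_comp tG scaleZ_cont two_cont).
  exact: (cont2_comp tG scaleZ_cont c_cont orbitZ_cont).
- exact: (phi_of_shift hactL hactZ hbr c_hom b ha1' ha2' hb').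
Qed.
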